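(* Let $H$ be a subdirect product of $H_1 \times \cdots \times H_r$ and let $\pi_i\colon H \to H_i$ be the projection onto the $i$th factor. Assume that $N$ is a soluble normal subgroup of $H$ such that $H/N \cong T^\ell$, where $T$ is a nonabelian simple group and $\ell$ is a positive integer. Then there exist nonnegative integers $\ell_1, \dots, \ell_r$ with $\ell_1 + \cdots + \ell_r \geq \ell$ such that $H_i/N\pi_i \cong T^{\ell_i}$ for all $1 \leq i \leq r$.
   Context: $H$ is a subdirect product of $H_1\times\cdots\times H_r$ means $H \leq H_1\times\cdots\times H_r$ and each coordinate projection restricted to $H$ is surjective. $N\pi_i$ denotes the image of $N$ under $\pi_i$. *)

From HB Require Import structures.
From mathcomp Require Import all_boot all_fingroup all_solvable.
Set Implicit Arguments. Unset Strict Implicit. Unset Printing Implicit Defensive.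
Import GroupScope.
Local Open Scope group_scope.

Definition isog_pow (gT tT : finGroupType) (G : {set gT}) (T : {set tT})
  (l : nat) : Prop :=
  exists K : 'I_l -> {group gT},
    \big[dprod/1]_(j < l) (K j : {set gT}) = G /\ forall j, K j \isog T.

From HB Require Import structures.
From mathcomp Require Import all_boot all_fingroup all_solvable.
Set Implicit Arguments. Unset Strict Implicit. Unset Printing Implicit Defensive.
Import GroupScope.
Local Open Scope group_scope.

(* Each H_i / N pi_i is the image of H / N ~ T^l under the map q_i induced
   by pi_i, hence a quotient of T^l, hence itself a power T^(l_i): a normal
   subgroup of a direct product with a nonabelian simple factor either contains
   that factor or lies in the complementary factor.  The intersection M of the
   kernels of the q_i is soluble, because its preimage L in H satisfies
   L pi_i <= N pi_i for every i and H embeds in the product of the H_i.  As T^l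
   has no nontrivial soluble normal subgroup, M = 1, so H / N embeds in the
   product of the H_i / N pi_i and |T|^l <= |T|^(l_1 + ... + l_r). *)

Lemma simple_nonabelian_center1 (gT : finGroupType) (G : {group gT}) :
  simple G -> ~~ abelian G -> 'Z(G) = 1.
Proof.
move=> simG nabG; have [_ /(_ _ (center_normal G))] := simpleP _ simG.
by case=> // /center_idP abG; rewrite abG in nabG.
Qed.

Lemma dprod_simple_normal (gT : finGroupType) (A B G M : {group gT}) :
    A \x B = G -> simple A -> ~~ abelian A -> M <| G ->
  A \subset M \/ M \subset B.
Proof.
move=> defG simA nabA nsMG.
have [/andP[sAG nAG] /andP[sBG nBG]] := dprod_normal2 defG.
have [sMG nMG] := andP nsMG.
have [_ /(_ _ (normalGI sAG nsMG))] := simpleP _ simA.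
case=> [tiAM | /setIidPl]; [right | by left].
have cAM : A \subset 'C(M).
  apply/commG1P/trivgP; rewrite -tiAM (@commg_subI _ A M A M) //.
    by rewrite subsetI subxx (subset_trans sAG nMG).
  by rewrite subsetI subxx (subset_trans sMG nAG).
have nABA : A \subset 'N(A) :&: 'N(B).
  by rewrite subsetI normG (subset_trans sAG nBG).
have /dprodW := subcent_dprod defG nABA.
rewrite -[X in X * _]/('Z(A)) simple_nonabelian_center1 // mul1g => defCGA.
by apply: subset_trans (subsetIl B 'C(A)); rewrite defCGA subsetI sMG centsC.
Qed.

Section DirectPower.

Variables (tT : finGroupType) (T : {group tT}).

Lemma isog_pow0 (gT : finGroupType) (G : {group gT}) :
  isog_pow G T 0 <-> G :=: 1.
Proof.
split; first by case=> K [<- _]; rewrite big_ord0.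
by move->; exists (fun=> 1%G); split; [rewrite big_ord0 | case].
Qed.

Lemma isog_powS (gT : finGroupType) (G : {group gT}) k :
  isog_pow G T k.+1 <->
  exists A B : {group gT}, [/\ A \x B = G, A \isog T & isog_pow B T k].
Proof.
split.
  case=> K [defG isoK]; rewrite big_ord_recl in defG.
  have [[_ B _ defB] _ _ _] := dprodP defG.
  exists (K ord0), B; split => //; first by rewrite -defB.
  by exists (fun j => K (lift ord0 j)); split.
case=> A [B [defG isoA [K [defB isoK]]]].
exists (fun j => if unlift ord0 j is Some j' then K j' else A); split.
  rewrite big_ord_recl unlift_none.
  by under eq_bigr do rewrite liftK; rewrite defB.
by move=> j; case: unliftP.
Qed.

Lemma card_isog_pow (gT : finGroupType) (G : {group gT}) k :
  isog_pow G T k -> #|G| = (#|T| ^ k)%N.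
Proof.
case=> K [defG isoK]; rewrite -(bigdprod_card defG).
rewrite -[k in RHS]card_ord -prod_nat_const.
by apply: eq_bigr => j _; apply: card_isog.
Qed.

Lemma isog_pow_isog (gT rT : finGroupType) (G : {group gT}) (R : {group rT}) k :
  G \isog R -> isog_pow G T k -> isog_pow R T k.
Proof.
case/isogP=> f injf <- [K [defG isoK]].
have sKG j : K j \subset G.
  by rewrite -(bigdprodWY defG) sub_gen // (bigcup_sup j).
exists (fun j => f @* K j)%G; split; first exact: injm_bigdprod.
by move=> j; apply: isog_trans (isoK j); rewrite isog_sym sub_isog.
Qed.

Hypotheses (simT : simple T) (nabT : ~~ abelian T).

Lemma isog_pow_sol_normal_trivg (gT : finGroupType) (G M : {group gT}) k :
  isog_pow G T k -> M <| G -> solvable M -> M :=: 1.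
Proof.
elim: k G => [|k IHk] G.
  by move/isog_pow0=> G1 /andP[sMG _] _; apply/trivgP; rewrite -G1.
case/isog_powS=> A [B [defG isoA powB]] nsMG solM.
have simA : simple A by rewrite (isog_simple isoA).
have nabA : ~~ abelian A by rewrite (isog_abelian isoA).
have [sAM | sMB] := dprod_simple_normal defG simA nabA nsMG.
  have /simple_sol_prime/(_ simA)/prime_cyclic/cyclic_abelian abA :=
    solvableS sAM solM.
  by rewrite abA in nabA.
have [_ /andP[sBG _]] := dprod_normal2 defG.
exact: IHk B powB (normalS sMB sBG nsMG) solM.
Qed.

Lemma isog_pow_quotient (gT : finGroupType) (G M : {group gT}) k :
  isog_pow G T k -> M <| G -> exists m, isog_pow (G / M) T m.
Proof.
elim: k G M => [|k IHk] G M.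
  by move/isog_pow0=> G1 _; exists 0; apply/isog_pow0; rewrite /= G1 quotient1.
case/isog_powS=> A [B [defG isoA powB]] nsMG.
have simA : simple A by rewrite (isog_simple isoA).
have nabA : ~~ abelian A by rewrite (isog_abelian isoA).
have [/andP[sAG _] /andP[sBG _]] := dprod_normal2 defG.
have [_ defAB _ tiAB] := dprodP defG.
have [sMG nMG] := andP nsMG.
have [sAM | sMB] := dprod_simple_normal defG simA nabA nsMG.
  have [m powBM] := IHk B _ powB (normalGI sBG nsMG).
  have -> : G / M = B / M.
    by rewrite -defAB -quotientMidl mulgA mulGSid // quotientMidl.
  exists m; apply: isog_pow_isog powBM.
  by rewrite /= setIC second_isog ?(subset_trans sBG nMG).
have [m powBM] := IHk B M powB (normalS sMB sBG nsMG).
have tiMA : M :&: A = 1 by apply/trivgP; rewrite -tiAB setIC setSI.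
exists m.+1; apply/isog_powS; exists (A / M)%G, (B / M)%G; split=> //.
  rewrite dprodEcp; first exact: quotient_cprod (dprodWcp defG).
  by rewrite -quotientIG // tiAB quotient1.
apply: (isog_trans _ isoA).
by rewrite isog_sym quotient_isog ?(subset_trans sAG nMG).
Qed.

End DirectPower.

Lemma card_leq_bigcap_quotient (gT : finGroupType) (I : Type) (s : seq I)
    (K : I -> {group gT}) (G : {group gT}) :
  (forall i, G \subset 'N(K i)) ->
  (#|G| <= #|G :&: \bigcap_(i <- s) K i| * \prod_(i <- s) #|G / K i|)%N.
Proof.
elim: s G => [|i s IHs] G nKG; first by rewrite !big_nil setIT muln1.
rewrite !big_cons setIA mulnCA -(Lagrange (subsetIl G (K i))) indexgI.
rewrite -card_quotient // mulnC leq_mul2l; apply/orP; right.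
have nKGi j : G :&: K i \subset 'N(K j) := subset_trans (subsetIl _ _) (nKG j).
apply: leq_trans (IHs _ nKGi) _; rewrite leq_mul2l; apply/orP; right.
by apply: leq_prod => j _; rewrite subset_leq_card ?quotientS ?subsetIl.
Qed.

Lemma isog_pow_bigcap_leq (gT tT : finGroupType) (T : {group tT}) (I : finType)
    (G : {group gT}) (K : I -> {group gT}) l (ls : I -> nat) :
    T :!=: 1 -> isog_pow G T l -> (forall i, G \subset 'N(K i)) ->
    (forall i, isog_pow (G / K i) T (ls i)) -> G :&: \bigcap_i K i = 1 ->
  (l <= \sum_i ls i)%N.
Proof.
move=> ntT powG nKG powGK tiGK.
have := card_leq_bigcap_quotient (index_enum I) nKG.
rewrite tiGK cards1 mul1n (card_isog_pow powG).
under eq_bigr do rewrite (card_isog_pow (powGK _)).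
by rewrite -expn_sum leq_exp2l ?cardG_gt1.
Qed.

Lemma bigcap_ker_sol (gT rT : finGroupType) (D : {group gT}) (I : Type)
    (s : seq I) (f : I -> {morphism D >-> rT}) (G : {group gT}) :
    G \subset D -> (forall i, solvable (f i @* G)) ->
  solvable (G :&: \bigcap_(i <- s) 'ker (f i)) -> solvable G.
Proof.
elim: s G => [|i s IHs] G sGD solfG; first by rewrite big_nil setIT.
rewrite big_cons setIA => /IHs solGK.
have sGKD : G :&: 'ker (f i) \subset D := subset_trans (subsetIl _ _) sGD.
rewrite (series_sol (normalGI sGD (ker_normal (f i)))) solGK //.
  by rewrite (isog_sol (first_isog_loc (f i) sGD)) solfG.
by move=> j; apply: solvableS (solfG j); rewrite morphimS ?subsetIl.
Qed.

Lemma morphim_coset_ker_quotm (gT rT : finGroupType) (G H : {group gT})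
    (f : {morphism G >-> rT}) (nsHG : H <| G) :
  f @* (coset H @*^-1 'ker (quotm f nsHG)) = f @* H.
Proof.
have nHkerf : 'ker f \subset 'N(H).
  by apply: subset_trans (normal_norm nsHG); apply/subsetP=> x /dom_ker.
by rewrite ker_quotm quotientK // morphimMl ?normal_sub // morphim_ker mulg1.
Qed.

Lemma sol_bigcap_ker_quotm (gT rT : finGroupType) (I : finType)
    (H N : {group gT}) (pi : I -> {morphism H >-> rT}) (nsNH : N <| H) :
    solvable N -> solvable (H :&: \bigcap_i 'ker (pi i)) ->
  solvable (H / N :&: \bigcap_i 'ker (quotm (pi i) nsNH)).
Proof.
move=> solN solHK; set M := _ :&: _.
pose L := coset N @*^-1 M.
have sLH : L \subset H by rewrite -(quotientGK nsNH) morphpreS ?subsetIl.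
have <- : L / N = M.
  apply: morphpreK; apply: subset_trans (subsetIl _ _) _.
  exact: quotientS _ (normal_norm nsNH).
apply/quotient_sol/(bigcap_ker_sol (s := index_enum I) (f := pi) sLH) => [i|].
  apply: solvableS (morphim_sol (pi i) solN).
  rewrite /= -(morphim_coset_ker_quotm (pi i) nsNH) morphimS // morphpreS //.
  exact: subset_trans (subsetIr _ _) (bigcap_inf i isT).
by apply: solvableS solHK; rewrite setSI.
Qed.

Theorem corollary2p6 (gT rT tT : finGroupType) (r : nat)
  (H N : {group gT}) (Hi : 'I_r -> {group rT})
  (pi : forall i : 'I_r, {morphism H >-> rT})
  (pi_onto : forall i, pi i @* H = Hi i)
  (pi_inj : H :&: \bigcap_(i < r) 'ker (pi i) = 1)
  (T : {group tT}) (l : nat)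
  (nsNH : N <| H) (solN : solvable N)
  (simT : simple T) (nabT : ~~ abelian T) (l_gt0 : (0 < l)%N)
  (isoHN : isog_pow (H / N) T l) :
  exists ls : 'I_r -> nat,
    (l <= \sum_(i < r) ls i)%N /\
    forall i, isog_pow (Hi i / (pi i @* N)) T (ls i).
Proof.
pose q i := quotm_morphism (pi i) nsNH.
have /fin_all_exists[ls powQ] i : exists m, isog_pow (H / N / 'ker (q i)) T m.
  exact: (isog_pow_quotient simT nabT isoHN (ker_normal (q i))).
exists ls; split=> [|i]; last first.
  rewrite -(pi_onto i) -morphim_quotm.
  exact: isog_pow_isog (first_isog (q i)) (powQ i).
apply: (@isog_pow_bigcap_leq _ _ T _ (H / N)%G (fun i => 'ker (q i))%G l ls
          _ isoHN _ powQ).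
- by case/simpleP: simT.
- exact: (fun i => ker_norm (q i)).
apply: (isog_pow_sol_normal_trivg simT nabT isoHN).
- rewrite /normal subsetIl normsI ?normG // norms_bigcap //.
  by apply/bigcapsP=> i _; apply: ker_norm.
- by apply: sol_bigcap_ker_quotm => //; rewrite pi_inj solvable1.
Qed.
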